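(* Let $G$ be a finite group acting on a space $X$ and $n\ge 2$. The evaluation map $\epsilon_n : M^G_n(X) \to X^n$, $(\alpha_1,g_1,\alpha_2,\ldots,g_{n-1},\alpha_n)\mapsto(\alpha_1(1),\ldots,\alpha_n(1))$, is a fibration. Moreover, its sectional category equals the sectional category of the saturated diagonal map $\Delta^n_G : X\times G^{n-1}\to X^n$, $(x,g_1,\ldots,g_{n-1})\mapsto (x, xg_1, xg_1g_2,\ldots, xg_1\cdots g_{n-1})$.
   Context: All spaces are Hausdorff, path-connected and locally path-connected; $G$ acts on the right. $PX$ denotes the space of paths $[0,1]\to X$ with the compact-open topology. $M^G_n(X)$ is the subspace of $PX\times G\times PX\times\cdots\times G\times PX$ (with $n$ path factors and $n-1$ group factors, $G$ discrete) consisting of tuples $(\alpha_1,g_1,\alpha_2,g_2,\ldots,\alpha_{n-1},g_{n-1},\alpha_n)$ with $\alpha_i(0)g_i=\alpha_{i+1}(0)$ for $1\le i\le n-1$. The (non-reduced) sectional category $\mathrm{secat}(p)$ of a map $p:E\to B$ is the least $k$ such that $B$ is covered by $k$ open sets on each of which $p$ admits a continuous section up to homotopy (for a fibration, a genuine continuous section); for a general map it is the sectional category of its fibrational replacement. *)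

From HB Require Import structures.
From mathcomp Require Import all_boot all_order all_algebra all_fingroup.
From mathcomp Require Import all_classical all_reals.
From mathcomp Require Import topology function_spaces discrete_topology.
From mathcomp Require Import subtype_topology.
From mathcomp Require Import Rstruct Rstruct_topology.
From Stdlib Require Rdefinitions.
Notation R := Rdefinitions.R.

Set Implicit Arguments.
Unset Strict Implicit.
Unset Printing Implicit Defensive.
Import Order.TTheory GRing.Theory Num.Theory.

Local Open Scope classical_set_scope.
Local Open Scope ring_scope.

Definition unitI : set R := `[0%R, 1%R].
Definition I : topologicalType := set_type unitI.

Lemma unitI0 : (0%R : R) \in unitI.
Proof. by apply/mem_set; rewrite /unitI /= in_itv /= lexx ler01. Qed.
Lemma unitI1 : (1%R : R) \in unitI.
Proof. by apply/mem_set; rewrite /unitI /= in_itv /= lexx ler01. Qed.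

Definition I0 : I := exist _ 0%R unitI0.
Definition I1 : I := exist _ 1%R unitI1.

Definition sub (X : topologicalType) (A : set X) : topologicalType := set_type A.

Definition PX (X : topologicalType) : topologicalType :=
  sub [set f : {compact-open, I -> X} | continuous (f : I -> X)].

Definition pev (X : topologicalType) (a : PX X) (t : I) : X := (val a : I -> X) t.

Definition path_joined (X : topologicalType) (A : set X) (x y : X) : Prop :=
  exists g : I -> X, [/\ continuous g, g I0 = x, g I1 = y & forall t, A (g t)].

Definition path_connected_set (X : topologicalType) (A : set X) : Prop :=
  forall x y, A x -> A y -> path_joined A x y.

Definition path_connected_space (X : topologicalType) : Prop :=
  path_connected_set [set: X].

Definition locally_path_connected (X : topologicalType) : Prop :=
  forall (x : X) (U : set X), nbhs x U ->
    exists V : set X, [/\ open V, V x, V `<=` U & path_connected_set V].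

Definition continuous_right_action (gT : finGroupType) (X : topologicalType)
    (act : X -> gT -> X) : Prop :=
  [/\ forall x, act x 1%g = x,
      forall x g h, act (act x g) h = act x (g * h)%g
    & forall g, continuous (fun x => act x g)].

Definition Gd (gT : finGroupType) : topologicalType := discrete_topology gT.

Lemma ord_succ_lt n (i : 'I_n.-1) : (i.+1 < n)%N.
Proof. by case: n i => [|n] [i /= Hi]. Qed.

Definition oL n (i : 'I_n.-1) : 'I_n := widen_ord (leq_pred n) i.
Definition oR n (i : 'I_n.-1) : 'I_n := Ordinal (ord_succ_lt i).

(** * The space M^G_n(X) ⊂ PX × G × PX × ... × G × PX, stored as
     ((α_1,...,α_n),(g_1,...,g_{n-1})) with the product topology *)
Definition Mset (gT : finGroupType) (X : topologicalType) (act : X -> gT -> X)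
    (n : nat) : set ({ptws 'I_n -> PX X} * {ptws 'I_n.-1 -> Gd gT}) :=
  [set p | forall i : 'I_n.-1,
     act (pev (p.1 (oL i)) I0) (p.2 i) = pev (p.1 (oR i)) I0].

Arguments Mset {gT X} act n.

Definition MG (gT : finGroupType) (X : topologicalType) (act : X -> gT -> X)
    (n : nat) : topologicalType := sub (Mset act n).

Arguments MG {gT X} act n.

Definition Xn (X : topologicalType) (n : nat) : topologicalType :=
  {ptws 'I_n -> X}.

Definition evalMap (gT : finGroupType) (X : topologicalType)
    (act : X -> gT -> X) (n : nat) : MG act n -> Xn X n :=
  fun m k => pev ((val m).1 k) I1.

Arguments evalMap {gT X} act n.

Definition satDiag (gT : finGroupType) (X : topologicalType)
    (act : X -> gT -> X) (n : nat) : X * {ptws 'I_n.-1 -> Gd gT} -> Xn X n :=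
  fun p k => act p.1 (\prod_(j : 'I_n.-1 | (j < k)%N) p.2 j)%g.

Arguments satDiag {gT X} act n.

Definition hurewicz_fibration (E B : topologicalType) (p : E -> B) : Prop :=
  forall (Z : topologicalType) (H : Z * I -> B) (f0 : Z -> E),
    continuous H -> continuous f0 -> (forall z, p (f0 z) = H (z, I0)) ->
    exists Ht : Z * I -> E,
      [/\ continuous Ht, forall w, p (Ht w) = H w & forall z, Ht (z, I0) = f0 z].

Definition has_homotopy_section (E B : topologicalType) (p : E -> B) (U : set B)
  : Prop :=
  exists s : sub U -> E, continuous s /\
    exists Hm : sub U * I -> B,
      [/\ continuous Hm, forall u, Hm (u, I0) = p (s u)
        & forall u, Hm (u, I1) = val u].

Definition secat_le (E B : topologicalType) (p : E -> B) (k : nat) : Prop :=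
  exists U : 'I_k -> set B,
    [/\ forall i, open (U i), \bigcup_(i in [set: 'I_k]) U i = [set: B]
      & forall i, has_homotopy_section p (U i)].

Lemma secat_ex_bool (E B : topologicalType) (p : E -> B) :
  (exists k, secat_le p k) -> exists k, `[< secat_le p k >].
Proof. by case=> k hk; exists k; apply/asboolP. Qed.

Definition secat (E B : topologicalType) (p : E -> B) : option nat :=
  match pselect (exists k, secat_le p k) with
  | left h => Some (ex_minn (secat_ex_bool h))
  | right _ => None
  end.

From HB Require Import structures.
From mathcomp Require Import all_boot all_order all_algebra all_fingroup.
From mathcomp Require Import all_classical all_reals.
From mathcomp Require Import topology function_spaces discrete_topology.
From mathcomp Require Import subtype_topology normedtype.
From mathcomp Require Import Rstruct Rstruct_topology.
From mathcomp Require Import lra.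

(* ε_n is a fibration: a homotopy of (α_i(1))_i is lifted by running each α_i
   and then the homotopy itself, reparametrized so that the concatenation
   stays a path in [0,1]; the group labels never change.  For the sectional
   categories it suffices that ε_n and Δ^n_G admit homotopy sections over the
   same open sets.  Constant paths turn a section of Δ^n_G into one of ε_n.
   Conversely a homotopy section of the fibration ε_n may be taken strict;
   the starting points α_i(0) = α_1(0)g_1...g_(i-1) of its paths form a
   section of Δ^n_G, connected to the identity by running the paths. *)

Set Implicit Arguments.
Unset Strict Implicit.
Unset Printing Implicit Defensive.
Import Order.TTheory GRing.Theory Num.Theory.
Local Open Scope classical_set_scope.
Local Open Scope ring_scope.

Lemma comp_continuous (A B C : topologicalType) (f : A -> B) (g : B -> C) :
  continuous f -> continuous g -> continuous (fun x => g (f x)).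
Proof. by move=> hf hg x; exact: (continuous_comp (hf x) (hg (f x))). Qed.

Lemma fst_continuous (A B : topologicalType) : continuous (@fst A B).
Proof. by move=> [a b]; exact: cvg_fst. Qed.

Lemma snd_continuous (A B : topologicalType) : continuous (@snd A B).
Proof. by move=> [a b]; exact: cvg_snd. Qed.

Lemma pair_continuous (Z A B : topologicalType) (f : Z -> A) (g : Z -> B) :
  continuous f -> continuous g -> continuous (fun z => (f z, g z)).
Proof. by move=> hf hg z; apply: cvg_pair; [exact: hf | exact: hg]. Qed.

Lemma ptws_continuous (Z : topologicalType) (J : Type) (Y : topologicalType)
    (h : Z -> {ptws J -> Y}) :
  (forall j, continuous (fun z => h z j)) -> continuous h.
Proof.
move=> hc z.
have [_] := @cvg_sup _ _
  (fun j => Topological.class (initial_topology (fun f : J -> Y => f j)))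
  (h @ nbhs z) (h z) _.
apply=> j.
have : continuous (h : Z -> initial_topology (fun f : J -> Y => f j)).
  by apply: continuous_comp_initial; exact: hc.
exact.
Qed.

Lemma paste_continuous (T U : topologicalType) (phi : T -> R) (f g1 g2 : T -> U) :
  continuous phi -> continuous g1 -> continuous g2 ->
  (forall t, phi t <= 1 -> f t = g1 t) -> (forall t, 1 <= phi t -> f t = g2 t) ->
  continuous f.
Proof.
move=> cphi cg1 cg2 e1 e2.
have cA : closed [set t | phi t <= 1].
  exact: (proj1 (continuous_closedP phi) cphi _ (@closed_le R 1)).
have cB : closed [set t | 1 <= phi t].
  exact: (proj1 (continuous_closedP phi) cphi _ (@closed_ge R 1)).
apply/continuous_subspace_setT.
have -> : [set: T] = [set t | phi t <= 1] `|` [set t | 1 <= phi t].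
  apply/seteqP; split => // t _ /=; case: (lerP (phi t) 1) => h; [left|right] => //.
  exact: ltW.
apply: withinU_continuous => //.
  apply: (@subspace_eq_continuous _ _ _ g1); first by move=> t /set_mem /e1 <-.
  exact: continuous_subspaceT.
apply: (@subspace_eq_continuous _ _ _ g2); first by move=> t /set_mem /e2 <-.
exact: continuous_subspaceT.
Qed.

Definition clamp (r : R) : R := Num.min (Num.max r 0) 1.

Lemma clamp_in_unitI r : clamp r \in unitI.
Proof.
apply/mem_set; rewrite /unitI /= in_itv /= /clamp.
by rewrite ge_min lexx orbT andbT le_min ler01 le_max lexx orbT.
Qed.

Definition clampI (r : R) : I := exist _ (clamp r) (clamp_in_unitI r).

Lemma clamp_id r : 0 <= r <= 1 -> clamp r = r.
Proof. by move=> /andP[r0 r1]; rewrite /clamp (max_idPl r0) (min_idPl r1). Qed.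

Lemma valI_bounds (t : I) : 0 <= val t <= 1.
Proof. by case: t => r /= /set_mem; rewrite /unitI /= in_itv. Qed.

Lemma clampIK (t : I) : clampI (val t) = t.
Proof. by apply: val_inj => /=; rewrite clamp_id // valI_bounds. Qed.

Lemma clampI0 : clampI 0 = I0.
Proof. by apply: val_inj; rewrite /= clamp_id // lexx ler01. Qed.

Lemma clampI1 : clampI 1 = I1.
Proof. by apply: val_inj; rewrite /= clamp_id // lexx ler01. Qed.

Lemma clampI_continuous : continuous clampI.
Proof.
apply: continuous_comp_initial => x /=; rewrite /clamp.
apply: (@continuous_min _ _ (fun r : R => Num.max r 0) (fun _ => 1)).
  apply: (@continuous_max _ _ (fun r : R => r) (fun _ => 0)).
    exact: cvg_id.
  exact: cvg_cst.
exact: cvg_cst.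
Qed.

Lemma valI_continuous : continuous (val : I -> R).
Proof. exact: initial_continuous. Qed.

Lemma I_compact : compact [set: I].
Proof.
have -> : [set: I] = clampI @` `[0%R, 1%R].
  apply/seteqP; split => // t _; exists (val t); last exact: clampIK.
  by rewrite /= in_itv /= valI_bounds.
apply: continuous_compact; last exact: segment_compact.
apply: continuous_subspaceT => x; exact: clampI_continuous.
Qed.

Lemma I_hausdorff : hausdorff_space I.
Proof.
rewrite open_hausdorff => x y xy.
have : hausdorff_space R := @Rhausdorff _.
rewrite open_hausdorff => /(_ (val x) (val y)).
case; first by apply: contra xy => /eqP /val_inj ->.
move=> [A B] /= [xA yB] [oA oB /eqP AB].
have preim_open := proj1 (continuousP _) valI_continuous.
exists ((val : I -> R) @^-1` A, (val : I -> R) @^-1` B) => /=.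
  by rewrite !inE; move: xA yB; rewrite !inE.
split; [exact: preim_open | exact: preim_open |].
apply/eqP/seteqP; split => // t [tA tB].
by have : (A `&` B) (val t) by []; rewrite AB.
Qed.

Lemma I_locally_compact : locally_compact [set: I].
Proof.
move=> x _; exists [set: I]; first by rewrite withinET; exact: filterT.
by split; [exact: I_compact | exact: closedT].
Qed.

Definition homotopic (A B : topologicalType) (f g : A -> B) : Prop :=
  exists K : A * I -> B,
    [/\ continuous K, forall a, K (a, I0) = f a & forall a, K (a, I1) = g a].

Lemma homotopic_comp (A A' B : topologicalType) (f g : A -> B) (h : A' -> A) :
  continuous h -> homotopic f g ->
  homotopic (fun a => f (h a)) (fun a => g (h a)).
Proof.
move=> ch [K [cK K0 K1]]; exists (fun w => K (h w.1, w.2)); split => //.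
apply: (comp_continuous _ cK); apply: pair_continuous; last exact: snd_continuous.
exact: comp_continuous (@fst_continuous _ _) ch.
Qed.

Definition mkPX (X : topologicalType) (f : I -> X) (hf : continuous f) : PX X :=
  exist _ (f : {compact-open, I -> X}) (mem_set hf).

Lemma pev_mkPX (X : topologicalType) (f : I -> X) (hf : continuous f) t :
  pev (mkPX hf) t = f t.
Proof. by []. Qed.

Lemma PX_ext (X : topologicalType) (a b : PX X) :
  (forall t, pev a t = pev b t) -> a = b.
Proof. by move=> h; apply: val_inj; apply/funext. Qed.

Lemma path_continuous (X : topologicalType) (a : PX X) : continuous (pev a).
Proof. by case: a => f hf; exact: (set_mem hf). Qed.

(* Joint continuity of evaluation is where the compact-open topology and the
   local compactness of [0,1] are needed. *)
Lemma pev_continuous (X : topologicalType) :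
  continuous (fun p : PX X * I => pev p.1 p.2).
Proof.
pose f (a : PX X) : {compact-open, I -> X} := val a.
have -> : (fun p : PX X * I => pev p.1 p.2) = uncurry f by apply/funext; case.
apply: continuous_uncurry I_locally_compact I_hausdorff _ (@path_continuous X).
exact: initial_continuous.
Qed.

Lemma mkPX_continuous (Z X : topologicalType) (F : Z -> I -> X)
    (hF : forall z, continuous (F z)) :
  continuous (fun p : Z * I => F p.1 p.2) -> continuous (fun z => mkPX (hF z)).
Proof.
move=> hc; apply: continuous_comp_initial => /=.
exact: (@continuous_curry_fun Z I X (fun p : Z * I => F p.1 p.2) hc).
Qed.

Definition constP (X : topologicalType) (x : X) : PX X :=
  mkPX (@cst_continuous I X x).

Lemma prod_ord_prefixS (gT : finGroupType) (m : nat) (g : 'I_m -> gT) (k : nat)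
    (hk : (k < m)%N) :
  (\prod_(j : 'I_m | (j < k.+1)%N) g j)%g =
  ((\prod_(j : 'I_m | (j < k)%N) g j) * g (Ordinal hk))%g.
Proof.
case: m g hk => [|m] g hk //.
pose F (j : nat) := g (inord j).
have toF c : (\prod_(j : 'I_m.+1 | (j < c)%N) g j)%g =
             (\prod_(j : 'I_m.+1 | (j < c)%N) F j)%g.
  by apply: eq_bigr => j _; rewrite /F inord_val.
rewrite !toF -(big_ord_widen _ F hk) -(big_ord_widen _ F (ltnW hk)) big_ord_recr /=.
by congr (_ * _)%g; rewrite /F; congr (g _); apply: val_inj; rewrite /= inordK.
Qed.

Section PathTuples.
Variables (gT : finGroupType) (X : topologicalType) (act : X -> gT -> X) (n : nat).

Definition mkMG (p : {ptws 'I_n -> PX X} * {ptws 'I_n.-1 -> Gd gT})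
  (hp : Mset act n p) : MG act n := exist _ p (mem_set hp).

Lemma MsetP (m : MG act n) : Mset act n (val m).
Proof. by case: m => p hp; exact: (set_mem hp). Qed.

Lemma MG_path_continuous i : continuous (fun m : MG act n => (val m).1 i).
Proof.
apply: (@comp_continuous _ _ _ (fun m : MG act n => (val m).1) (fun f => f i)).
  exact: comp_continuous (@initial_continuous _ _ _) (@fst_continuous _ _).
exact: proj_continuous.
Qed.

Lemma MG_labels_continuous : continuous (fun m : MG act n => (val m).2).
Proof. exact: comp_continuous (@initial_continuous _ _ _) (@snd_continuous _ _). Qed.

Lemma mkMG_continuous (Z : topologicalType)
    (F : Z -> {ptws 'I_n -> PX X} * {ptws 'I_n.-1 -> Gd gT})
    (hF : forall z, Mset act n (F z)) :
  (forall i, continuous (fun z => (F z).1 i)) -> continuous (fun z => (F z).2) ->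
  continuous (fun z => mkMG (hF z)).
Proof.
move=> h1 h2; apply: continuous_comp_initial => /=.
have -> : (set_val \o fun z => mkMG (hF z)) = (fun z => ((F z).1, (F z).2)).
  by apply/funext => z; exact: surjective_pairing.
by apply: pair_continuous => //; exact: ptws_continuous.
Qed.

Hypothesis hact : continuous_right_action act.

Lemma satDiag_succ p (i : 'I_n.-1) :
  satDiag act n p (oR i) = act (satDiag act n p (oL i)) (p.2 i).
Proof.
case: hact => _ actM _; rewrite /satDiag actM.
have -> : (oR i : nat) = i.+1 by [].
by rewrite (prod_ord_prefixS _ (ltn_ord i)); congr (act _ (_ * p.2 _)%g); exact: val_inj.
Qed.

Lemma Mset_satDiag p (n0 : (0 < n)%N) : Mset act n p ->
  satDiag act n (pev (p.1 (Ordinal n0)) I0, p.2) = (fun k => pev (p.1 k) I0).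
Proof.
case: hact => act1 _ _ hp; apply/funext => k.
have -> : k = Ordinal (ltn_ord k) by exact: val_inj.
move: (ltn_ord k); elim: (k : nat) => [|j IH] hj.
  rewrite /satDiag big_pred0 // act1; congr (pev (p.1 _) I0); exact: val_inj.
have hj1 : (j < n.-1)%N by case: n {n0 IH hp} p hj.
have -> : Ordinal hj = oR (Ordinal hj1) by exact: val_inj.
rewrite satDiag_succ -hp; congr act.
have -> : oL (Ordinal hj1) = Ordinal (ltnW hj) by exact: val_inj.
exact: IH.
Qed.

End PathTuples.

Section Lifting.
Variables (gT : finGroupType) (X : topologicalType) (act : X -> gT -> X) (n : nat).
Variables (Z : topologicalType) (H : Z * I -> Xn X n) (f0 : Z -> MG act n).
Hypotheses (cH : continuous H) (cf0 : continuous f0)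
  (Hf0 : forall z, evalMap act n (f0 z) = H (z, I0)).

Definition lift_time (q : (Z * I) * I) : R := val q.2 * (1 + val q.1.2).

(* The i-th path of the lift over (z, t) runs along the i-th path of f0 z,
   then along H (z, _) i up to time t, at speed 1 + t. *)
Definition lift_coord (i : 'I_n) (q : (Z * I) * I) : X :=
  if lift_time q <= 1 then pev ((val (f0 q.1.1)).1 i) (clampI (lift_time q))
  else H (q.1.1, clampI (lift_time q - 1)) i.

Lemma lift_time_continuous : continuous lift_time.
Proof.
move=> q; apply: (continuousM (s := fun q : (Z * I) * I => val q.2)
                              (t := fun q : (Z * I) * I => 1 + val q.1.2)).
  exact: (@comp_continuous _ _ _ snd _ (@snd_continuous _ _) valI_continuous).
apply: (continuousD (f := fun _ : (Z * I) * I => (1 : R^o))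
                    (g := fun q : (Z * I) * I => (val q.1.2 : R^o))).
  exact: cvg_cst.
apply: (@comp_continuous _ _ _ (fun q : (Z * I) * I => q.1.2) _ _ valI_continuous).
exact: (@comp_continuous _ _ _ fst snd (@fst_continuous _ _) (@snd_continuous _ _)).
Qed.

Lemma lift_coord_continuous i : continuous (lift_coord i).
Proof.
have cz : continuous (fun q : (Z * I) * I => q.1.1).
  exact: (@comp_continuous _ _ _ fst fst (@fst_continuous _ _) (@fst_continuous _ _)).
apply: (paste_continuous lift_time_continuous
  (g1 := fun q => pev ((val (f0 q.1.1)).1 i) (clampI (lift_time q)))
  (g2 := fun q => H (q.1.1, clampI (lift_time q - 1)) i)).
- apply: (@comp_continuous _ _ _ (fun q => ((val (f0 q.1.1)).1 i, clampI (lift_time q)))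
    (fun p : PX X * I => pev p.1 p.2)); last exact: pev_continuous.
  apply: pair_continuous.
    apply: (@comp_continuous _ _ _ _ (fun z => (val (f0 z)).1 i) cz).
    exact: (@comp_continuous _ _ _ f0 _ cf0 (@MG_path_continuous _ _ act n i)).
  exact: (@comp_continuous _ _ _ _ clampI lift_time_continuous clampI_continuous).
- apply: (@comp_continuous _ _ _ (fun q => H (q.1.1, clampI (lift_time q - 1)))
    (fun f => f i)); last exact: proj_continuous.
  apply: (comp_continuous _ cH); apply: pair_continuous => //.
  apply: (@comp_continuous _ _ _ (fun q => lift_time q - 1) clampI);
    last exact: clampI_continuous.
  move=> q; apply: (continuousB (f := fun q => (lift_time q : R^o)) (g := fun=> (1 : R^o))).
    exact: lift_time_continuous.
  exact: cvg_cst.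
- by move=> q h; rewrite /lift_coord h.
- move=> q h; rewrite /lift_coord; case: ifPn => // h'.
  have -> : lift_time q = 1 by apply/eqP; rewrite eq_le h h'.
  by rewrite subrr clampI1 clampI0 -Hf0.
Qed.

Lemma lift_coord_slice_continuous i w : continuous (fun s => lift_coord i (w, s)).
Proof.
apply: (@comp_continuous _ _ _ (fun s : I => (w, s))); last exact: lift_coord_continuous.
by apply: pair_continuous; [exact: cst_continuous | move=> s; exact: cvg_id].
Qed.

Definition lift_path i (w : Z * I) : PX X := mkPX (@lift_coord_slice_continuous i w).

Lemma lift_path_start i w : pev (lift_path i w) I0 = pev ((val (f0 w.1)).1 i) I0.
Proof. by rewrite pev_mkPX /lift_coord /lift_time /= mul0r ler01 clampI0. Qed.

Lemma lift_Mset w : Mset act n ((fun i => lift_path i w), (val (f0 w.1)).2).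
Proof. by move=> i /=; rewrite !lift_path_start; exact: (MsetP (f0 w.1) i). Qed.

Definition lift (w : Z * I) : MG act n := mkMG (lift_Mset w).

Lemma lift_continuous : continuous lift.
Proof.
apply: mkMG_continuous => [i|].
  apply: mkPX_continuous.
  have -> : (fun p : (Z * I) * I => lift_coord i (p.1, p.2)) = lift_coord i.
    by apply/funext; case.
  exact: lift_coord_continuous.
apply: (@comp_continuous _ _ _ fst (fun z => (val (f0 z)).2) (@fst_continuous _ _)).
exact: (@comp_continuous _ _ _ f0 _ cf0 (@MG_labels_continuous _ _ act n)).
Qed.

Lemma evalMap_lift w : evalMap act n (lift w) = H w.
Proof.
case: w => z t; apply/funext => k.
rewrite /evalMap /= pev_mkPX /lift_coord /lift_time /= mul1r.
case: ifPn => [t0|]; last by rewrite (addrC 1) addrK clampIK.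
have -> : t = I0.
  apply: val_inj => /=; have /andP[t_ge0 _] := valI_bounds t.
  have : (0 <= sval t)%R := t_ge0; lra.
by rewrite /= addr0 clampI1 -Hf0.
Qed.

Lemma lift0 z : lift (z, I0) = f0 z.
Proof.
apply: val_inj => /=; rewrite [RHS]surjective_pairing; congr pair.
apply/funext => i; apply: PX_ext => s.
rewrite pev_mkPX /lift_coord /lift_time /= addr0 mulr1.
by have /andP[_ ->] := valI_bounds s; rewrite clampIK.
Qed.

End Lifting.

Lemma evalMap_fibration (gT : finGroupType) (X : topologicalType)
    (act : X -> gT -> X) (n : nat) :
  hurewicz_fibration (evalMap act n).
Proof.
move=> Z H f0 cH cf0 Hf0; exists (lift cH cf0 Hf0).
by split; [exact: lift_continuous | exact: evalMap_lift | exact: lift0].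
Qed.

Lemma fibration_section (E B : topologicalType) (p : E -> B) (U : set B) :
  hurewicz_fibration p -> has_homotopy_section p U ->
  exists2 s : sub U -> E, continuous s & forall u, p (s u) = val u.
Proof.
move=> fib [s [cs [K [cK K0 K1]]]].
have [L [cL pL L0]] := fib _ K s cK cs (fun u => esym (K0 u)).
exists (fun u => L (u, I1)); last by move=> u; rewrite pL K1.
apply: (@comp_continuous _ _ _ (fun u => (u, I1)) L) => //.
by apply: pair_continuous; [move=> u; exact: cvg_id | exact: cst_continuous].
Qed.

Lemma eq_secat (E1 E2 B : topologicalType) (p1 : E1 -> B) (p2 : E2 -> B) :
  (forall U, has_homotopy_section p1 U <-> has_homotopy_section p2 U) ->
  secat p1 = secat p2.
Proof.
move=> hU.
have hk k : secat_le p1 k <-> secat_le p2 k.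
  by split => -[U [oU cU sU]]; exists U; split => // i; apply/hU.
rewrite /secat; case: pselect => h1; case: pselect => h2 //.
- congr Some; apply/eqP; rewrite eqn_leq.
  case: ex_minnP => k1 /asboolP hk1 min1; case: ex_minnP => k2 /asboolP hk2 min2.
  by rewrite min1 ?min2 //; apply/asboolP; apply/hk.
- by case: h2; case: h1 => k /hk; exists k.
- by case: h1; case: h2 => k /hk; exists k.
Qed.

Section HomotopySections.
Variables (gT : finGroupType) (X : topologicalType) (act : X -> gT -> X) (n : nat).
Hypothesis hact : continuous_right_action act.

Lemma satDiag_section_evalMap (U : set (Xn X n)) :
  has_homotopy_section (satDiag act n) U -> has_homotopy_section (evalMap act n) U.
Proof.
move=> [s [cs [K [cK K0 K1]]]].
have constM u : Mset act n ((fun i => constP (K (u, I0) i)), (s u).2).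
  by move=> i /=; rewrite !pev_mkPX K0 satDiag_succ.
exists (fun u => mkMG (constM u)); split; last by exists K.
apply: mkMG_continuous => [i|].
  apply: (@mkPX_continuous _ _ (fun u (_ : I) => K (u, I0) i)).
  apply: (@comp_continuous _ _ _ (fun p : sub U * I => K (p.1, I0)) (fun f => f i));
    last exact: proj_continuous.
  apply: (comp_continuous _ cK).
  by apply: pair_continuous; [exact: fst_continuous | exact: cst_continuous].
exact: (@comp_continuous _ _ _ s snd cs (@snd_continuous _ _)).
Qed.

Hypothesis n0 : (0 < n)%N.

Definition MG_origin (m : MG act n) : X * {ptws 'I_n.-1 -> Gd gT} :=
  (pev ((val m).1 (Ordinal n0)) I0, (val m).2).

Lemma MG_origin_continuous : continuous MG_origin.
Proof.
apply: pair_continuous; last exact: MG_labels_continuous.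
apply: (@comp_continuous _ _ _ (fun m : MG act n => (val m).1 (Ordinal n0))
          (fun a => pev a I0)); first exact: MG_path_continuous.
apply: (@comp_continuous _ _ _ (fun a : PX X => (a, I0)) _ _ (@pev_continuous X)).
by apply: pair_continuous; [move=> a; exact: cvg_id | exact: cst_continuous].
Qed.

Lemma satDiag_origin_homotopic :
  homotopic (fun m => satDiag act n (MG_origin m)) (evalMap act n).
Proof.
exists (fun w : MG act n * I => (fun k => pev ((val w.1).1 k) w.2) : Xn X n).
split=> [|m|//]; last by rewrite /MG_origin Mset_satDiag //; exact: MsetP.
apply: ptws_continuous => k.
apply: (@comp_continuous _ _ _ (fun w : MG act n * I => ((val w.1).1 k, w.2))
         (fun p : PX X * I => pev p.1 p.2)); last exact: pev_continuous.
apply: pair_continuous; last exact: snd_continuous.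
exact: (@comp_continuous _ _ _ fst _ (@fst_continuous _ _) (@MG_path_continuous _ _ act n k)).
Qed.

Lemma evalMap_section_satDiag (U : set (Xn X n)) :
  has_homotopy_section (evalMap act n) U -> has_homotopy_section (satDiag act n) U.
Proof.
move=> /(fibration_section (@evalMap_fibration _ _ act n)) [s cs evalMap_s].
exists (fun u => MG_origin (s u)); split.
  exact: (@comp_continuous _ _ _ s _ cs MG_origin_continuous).
have -> : val = (fun u => evalMap act n (s u)) by apply/funext => u; rewrite evalMap_s.
exact: (homotopic_comp cs satDiag_origin_homotopic).
Qed.

End HomotopySections.

Theorem mainTheorem1 (gT : finGroupType) (X : topologicalType)
    (act : X -> gT -> X) (n : nat) :
  hausdorff_space X -> path_connected_space X -> locally_path_connected X ->
  continuous_right_action act -> (2 <= n)%N ->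
  hurewicz_fibration (evalMap act n) /\
  secat (evalMap act n) = secat (satDiag act n).
Proof.
move=> _ _ _ hact n2; split; first exact: evalMap_fibration.
have n0 : (0 < n)%N by apply: leq_trans n2.
apply: eq_secat => U; split.
- exact: evalMap_section_satDiag.
- exact: satDiag_section_evalMap.
Qed.
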